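(* Let $n\ge2$ and consider the general linear–quadratic game with dynamics $\mathbf x_{t+1}=\mathbf A_t\mathbf x_t+\mathbf B_t\mathbf u_t+\mathbf w_t$ and per-step costs $c^i_t(\mathbf x_t,\mathbf u_t)=\mathbf x_t^\top Q^i_t\mathbf x_t+\mathbf u_t^\top R^i_t\mathbf u_t$, $i\in\{1,\dots,n\}$, and suppose the players are exchangeable. Then there exist matrices $A_t,B_t,\bar A_t,\bar B_t$ such that, with $\bar x_t=\frac1n\sum_{j=1}^nx^j_t$ and $\bar u_t=\frac1n\sum_{j=1}^nu^j_t$, the dynamics of every player $i$ read $x^i_{t+1}=A_tx^i_t+B_tu^i_t+\bar A_t\bar x_t+\bar B_t\bar u_t+w^i_t$. Moreover, there exist matrices $Q_t,R_t,S^x_t,S^u_t,\bar Q_t,\bar R_t,G^x_t,G^u_t$ such that the cost of every player $i$ can be written as $c^i_t=(x^i_t)^\top Q_tx^i_t+2(x^i_t)^\top S^x_t\bar x_t+\bar x_t^\top\bar Q_t\bar x_t+(u^i_t)^\top R_tu^i_t+2(u^i_t)^\top S^u_t\bar u_t+\bar u_t^\top\bar R_t\bar u_t+\frac1n\sum_{j=1}^n\big((x^j_t)^\top G^x_tx^j_t+(u^j_t)^\top G^u_tu^j_t\big)$.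
   Context: Here $\mathbf x_t=(x^1_t,\dots,x^n_t)$ with $x^i_t\in\mathbb R^{d_x}$, $\mathbf u_t=(u^1_t,\dots,u^n_t)$ with $u^i_t\in\mathbb R^{d_u}$, $\mathbf w_t=(w^1_t,\dots,w^n_t)$ with $w^i_t\in\mathbb R^{d_x}$, and $\mathbf A_t,\mathbf B_t,Q^i_t,R^i_t$ are matrices of appropriate (block) sizes; write $\mathbf c_t=(c^1_t,\dots,c^n_t)$. For $i,j\in\{1,\dots,n\}$ let $\sigma_{i,j}$ denote the map swapping the $i$-th and $j$-th components of an $n$-component vector. The players are called exchangeable if for every pair $i,j$ and every $t$: whenever $\mathbf x_{t+1}=\mathbf A_t\mathbf x_t+\mathbf B_t\mathbf u_t+\mathbf w_t$, also $\sigma_{i,j}(\mathbf x_{t+1})=\mathbf A_t\sigma_{i,j}(\mathbf x_t)+\mathbf B_t\sigma_{i,j}(\mathbf u_t)+\sigma_{i,j}(\mathbf w_t)$; and $\sigma_{i,j}(\mathbf c_t(\mathbf x_t,\mathbf u_t))=\mathbf c_t(\sigma_{i,j}(\mathbf x_t),\sigma_{i,j}(\mathbf u_t))$ for all $\mathbf x_t,\mathbf u_t$. *)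

From HB Require Import structures.
From mathcomp Require Import all_boot all_order all_algebra all_fingroup.
Set Implicit Arguments. Unset Strict Implicit. Unset Printing Implicit Defensive.
Import Order.TTheory GRing.Theory Num.Theory.
Local Open Scope ring_scope.

Definition jvec (R : realFieldType) (n d : nat) := 'I_n -> 'cV[R]_d.

Definition bmx (R : realFieldType) (n p q : nat) := 'I_n -> 'I_n -> 'M[R]_(p, q).

Definition bapply (R : realFieldType) (n p q : nat) (M : bmx R n p q)
  (v : jvec R n q) : jvec R n p :=
  fun i => \sum_(j < n) M i j *m v j.

Definition jadd (R : realFieldType) (n d : nat) (a b : jvec R n d) : jvec R n d :=
  fun i => a i + b i.

Definition bquad (R : realFieldType) (n d : nat) (M : bmx R n d d) (v : jvec R n d) : R :=
  \sum_(j < n) \sum_(k < n) ((v j)^T *m M j k *m v k) 0 0.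

Definition qf (R : realFieldType) (d : nat) (a : 'cV[R]_d) (M : 'M[R]_d) (b : 'cV[R]_d) : R :=
  ((a^T *m M) *m b) 0 0.

Definition swapc (T : Type) (n : nat) (i j : 'I_n) (v : 'I_n -> T) : 'I_n -> T :=
  fun k => v (tperm i j k).

Definition jmean (R : realFieldType) (n d : nat) (v : jvec R n d) : 'cV[R]_d :=
  (n%:R)^-1 *: \sum_(j < n) v j.

Definition costv (R : realFieldType) (n dx du : nat)
  (Q : 'I_n -> bmx R n dx dx) (Rm : 'I_n -> bmx R n du du)
  (x : jvec R n dx) (u : jvec R n du) : 'I_n -> R :=
  fun i => bquad (Q i) x + bquad (Rm i) u.

Definition exchangeable (R : realFieldType) (n dx du : nat)
  (A : nat -> bmx R n dx dx) (B : nat -> bmx R n dx du)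
  (Q : nat -> 'I_n -> bmx R n dx dx) (Rm : nat -> 'I_n -> bmx R n du du) : Prop :=
  forall (i j : 'I_n) (t : nat),
    (forall (x x' w : jvec R n dx) (u : jvec R n du),
        x' = jadd (jadd (bapply (A t) x) (bapply (B t) u)) w ->
        swapc i j x' =
        jadd (jadd (bapply (A t) (swapc i j x)) (bapply (B t) (swapc i j u))) (swapc i j w))
    /\
    (forall (x : jvec R n dx) (u : jvec R n du),
        swapc i j (costv (Q t) (Rm t) x u) = costv (Q t) (Rm t) (swapc i j x) (swapc i j u)).

(** Exchangeability means that the block matrices of the dynamics and the
    family of cost matrices are invariant under every transposition of the
    players.  For the dynamics this forces all diagonal blocks to agree and all
    off-diagonal blocks to agree, which is the mean-field form.  For the costs,
    the quadratic form of player [i0] is invariant under the transpositions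
    fixing [i0]; by polarization so are its symmetrized blocks
    [Q j l + (Q l j)^T], which therefore depend only on whether [j] or [l]
    equals [i0] and whether [j = l].  Summing this five-valued pattern gives
    the decomposition for player [i0], and swapping [i0] with [i] transfers it
    to every player with the same matrices. *)

From HB Require Import structures.
From mathcomp Require Import all_boot all_order all_algebra all_fingroup.
From mathcomp Require Import ring.
Import Order.TTheory GRing.Theory Num.Theory.
Local Open Scope ring_scope.
Set Implicit Arguments. Unset Strict Implicit. Unset Printing Implicit Defensive.

Section TpermInvariant.
Variables (n : nat) (T : Type).

Definition tperm_invariant (S : pred 'I_n) (F : 'I_n -> 'I_n -> T) :=
  forall a b, a \in S -> b \in S -> forall j l, F (tperm a b j) (tperm a b l) = F j l.

Variables (S : pred 'I_n) (F : 'I_n -> 'I_n -> T).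
Hypothesis F_inv : tperm_invariant S F.

Lemma tperm_in a b j : a \in S -> b \in S -> j \in S -> tperm a b j \in S.
Proof. by move=> aS bS jS; case: tpermP. Qed.

Lemma tperm_invariant_diag j j' : j \in S -> j' \in S -> F j j = F j' j'.
Proof. by move=> jS j'S; rewrite -(F_inv jS j'S) tpermL. Qed.

Lemma tperm_invariant_row i l l' : i \notin S -> l \in S -> l' \in S -> F i l = F i l'.
Proof.
move=> iS lS l'S; have ne_i k : k \in S -> k != i by apply: contraTneq => ->.
by rewrite -(F_inv lS l'S) tpermL tpermD ?ne_i.
Qed.

Lemma tperm_invariant_col i l l' : i \notin S -> l \in S -> l' \in S -> F l i = F l' i.
Proof.
move=> iS lS l'S; have ne_i k : k \in S -> k != i by apply: contraTneq => ->.
by rewrite -(F_inv lS l'S) tpermL tpermD ?ne_i.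
Qed.

Lemma tperm_invariant_offdiag j l j' l' :
  j \in S -> l \in S -> j' \in S -> l' \in S -> j != l -> j' != l' -> F j l = F j' l'.
Proof.
move=> jS lS j'S l'S jl j'l'; set k := tperm j j' l.
have kS : k \in S by exact: tperm_in.
have kj' : k != j' by rewrite -[j'](tpermL j j') (inj_eq perm_inj) eq_sym.
by rewrite -(F_inv jS j'S) tpermL -/k -(F_inv kS l'S) tpermL tpermD // eq_sym.
Qed.

End TpermInvariant.

Definition stab_block (T : Type) (n : nat) (i : 'I_n) (α β β' γ δ : T) (j l : 'I_n) : T :=
  if j == i then (if l == i then α else β)
  else if l == i then β' else if j == l then γ else δ.

Lemma tperm_invariant_stab_block (T : Type) (n : nat) (i k : 'I_n) (F : 'I_n -> 'I_n -> T) :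
  k != i -> tperm_invariant (predC1 i) F ->
  exists α β β' γ δ, forall j l, F j l = stab_block i α β β' γ δ j l.
Proof.
move=> ki F_inv.
have [δ offdiagE] : exists δ, forall j l, j != i -> l != i -> j != l -> F j l = δ.
  case: (pickP [pred p : 'I_n * 'I_n | [&& p.1 != i, p.2 != i & p.1 != p.2]]) =>
      [[j0 l0] /and3P [j0i l0i j0l0] | no_pair].
    exists (F j0 l0) => j l ji li jl.
    by apply: (tperm_invariant_offdiag F_inv); rewrite ?inE.
  (* n = 2: there is no such pair and δ is irrelevant. *)
  by exists (F k k) => j l ji li jl; move: (no_pair (j, l)); rewrite /= ji li jl.
exists (F i i), (F i k), (F k i), (F k k), δ => j l; rewrite /stab_block.
have [-> | ji] := eqVneq j i; have [-> | li] := eqVneq l i => //.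
- by apply: (tperm_invariant_row F_inv); rewrite ?inE ?eqxx.
- by apply: (tperm_invariant_col F_inv); rewrite ?inE ?eqxx.
- have [-> | jl] := eqVneq j l; last exact: offdiagE.
  by apply: (tperm_invariant_diag F_inv); rewrite ?inE ?eqxx.
Qed.

Section QuadraticForms.
Variable R : realFieldType.

Section Qf.
Variable d : nat.
Implicit Types (a b c : 'cV[R]_d) (M N : 'M[R]_d).

Lemma qfDl a b c M : qf (a + b) M c = qf a M c + qf b M c.
Proof. by rewrite /qf linearD !mulmxDl mxE. Qed.

Lemma qfDr a b c M : qf a M (b + c) = qf a M b + qf a M c.
Proof. by rewrite /qf mulmxDr mxE. Qed.

Lemma qfZl k a c M : qf (k *: a) M c = k * qf a M c.
Proof. by rewrite /qf linearZ -!scalemxAl mxE. Qed.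

Lemma qfZr k a c M : qf a M (k *: c) = k * qf a M c.
Proof. by rewrite /qf -scalemxAr mxE. Qed.

Lemma qfDm a c M N : qf a (M + N) c = qf a M c + qf a N c.
Proof. by rewrite /qf mulmxDr mulmxDl mxE. Qed.

Lemma qfZm k a c M : qf a (k *: M) c = k * qf a M c.
Proof. by rewrite /qf -scalemxAr -scalemxAl mxE. Qed.

Lemma qf0l c M : qf 0 M c = 0.
Proof. by rewrite /qf linear0 !mul0mx mxE. Qed.

Lemma qf0r c M : qf c M 0 = 0.
Proof. by rewrite /qf mulmx0 mxE. Qed.

Lemma qf0m a c : qf a 0 c = 0.
Proof. by rewrite /qf mulmx0 mul0mx mxE. Qed.

Lemma qf_suml n (a : 'I_n -> 'cV[R]_d) c M : qf (\sum_j a j) M c = \sum_j qf (a j) M c.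
Proof. by elim/big_rec2: _ => [|j x y _ <-]; rewrite ?qf0l ?qfDl. Qed.

Lemma qf_sumr n (a : 'I_n -> 'cV[R]_d) c M : qf c M (\sum_j a j) = \sum_j qf c M (a j).
Proof. by elim/big_rec2: _ => [|j x y _ <-]; rewrite ?qf0r ?qfDr. Qed.

Lemma qf_tr a c M : qf a M^T c = qf c M a.
Proof.
have trE (X : 'M[R]_1) : X 0 0 = X^T 0 0 by rewrite mxE.
by rewrite /qf [RHS]trE !trmx_mul trmxK mulmxA.
Qed.

Lemma qf_delta r s M : qf (delta_mx r 0) M (delta_mx s 0) = M r s.
Proof. by rewrite /qf trmx_delta -rowE -colE !mxE. Qed.

Lemma qf_inj M N : (forall a c, qf a M c = qf a N c) -> M = N.
Proof. by move=> MN; apply/matrixP => r s; rewrite -!qf_delta MN. Qed.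

End Qf.

Lemma mulmx_cV_inj p q (M N : 'M[R]_(p, q)) : (forall v : 'cV_q, M *m v = N *m v) -> M = N.
Proof. by move=> MN; apply: trmx_inj; apply/eqP/mulmxP => u; rewrite -[u]trmxK -!trmx_mul MN. Qed.

Section BlockForms.
Variable n : nat.

Definition ej d (j : 'I_n) (a : 'cV[R]_d) : jvec R n d := fun k => if k == j then a else 0.

Lemma sum_ej (V : zmodType) d (F : 'I_n -> 'cV[R]_d -> V) j a :
  (forall k, F k 0 = 0) -> \sum_k F k (ej j a k) = F j a.
Proof.
move=> F0; rewrite (bigD1 j) //= /ej eqxx big1 ?addr0 // => k /negbTE ->.
exact: F0.
Qed.

Lemma ej_tperm d a b j (v : 'cV[R]_d) k : ej j v (tperm a b k) = ej (tperm a b j) v k.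
Proof.
rewrite /ej; congr (if _ then _ else _).
by apply/eqP/eqP => [<- | ->]; rewrite tpermK.
Qed.

Lemma sum_swapc (V : zmodType) (T : Type) (F : T -> V) (v : 'I_n -> T) a b :
  \sum_j F (swapc a b v j) = \sum_j F (v j).
Proof. by rewrite /swapc [RHS](reindex_inj (@perm_inj _ (tperm a b))). Qed.

Lemma jmean_swapc d (v : jvec R n d) a b : jmean (swapc a b v) = jmean v.
Proof. by rewrite /jmean (sum_swapc id). Qed.

Section Bapply.
Variables p q : nat.
Implicit Types (M : bmx R n p q) (v : jvec R n q).

Lemma eq_bapply M v v' m : v =1 v' -> bapply M v m = bapply M v' m.
Proof. by move=> vv'; apply: eq_bigr => k _; rewrite vv'. Qed.

Lemma bapply0 M m : bapply M (fun _ => 0) m = 0.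
Proof. by rewrite /bapply big1 // => k _; rewrite mulmx0. Qed.

Lemma bapply_ej M m k (a : 'cV[R]_q) : bapply M (ej k a) m = M m k *m a.
Proof. by rewrite /bapply (sum_ej (F := fun l => mulmx (M m l))) // => l; rewrite mulmx0. Qed.

Lemma bapply_tperm_invariant (S : pred 'I_n) M :
  (forall a b, a \in S -> b \in S ->
     forall v m, bapply M v (tperm a b m) = bapply M (swapc a b v) m) ->
  tperm_invariant S M.
Proof.
move=> M_eqv a b aS bS j l; apply: mulmx_cV_inj => v.
rewrite -!bapply_ej M_eqv //; apply: eq_bapply => k.
by rewrite /swapc ej_tperm tpermK.
Qed.

End Bapply.

Section Bquad.
Variable d : nat.
Implicit Types (N : bmx R n d d) (v w y : jvec R n d).

Definition bbil N v w : R := \sum_j \sum_k qf (v j) (N j k) (w k).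

Definition bsym N : bmx R n d d := fun j l => N j l + (N l j)^T.

Lemma bquadE N v : bquad N v = bbil N v v.
Proof. by []. Qed.

Lemma eq_bquad N N' v v' :
  (forall j k, N j k = N' j k) -> v =1 v' -> bquad N v = bquad N' v'.
Proof.
move=> NN' vv'; rewrite !bquadE; apply: eq_bigr => j _; apply: eq_bigr => k _.
by rewrite NN' !vv'.
Qed.

Lemma bquad0 N : bquad N (fun _ => 0) = 0.
Proof. by rewrite bquadE /bbil big1 // => j _; rewrite big1 // => k _; rewrite qf0l. Qed.

Lemma bbilDl N u v w : bbil N (jadd u v) w = bbil N u w + bbil N v w.
Proof.
rewrite -big_split; apply: eq_bigr => j _.
by rewrite -big_split; apply: eq_bigr => k _; rewrite qfDl.
Qed.

Lemma bbilDr N u v w : bbil N u (jadd v w) = bbil N u v + bbil N u w.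
Proof.
rewrite -big_split; apply: eq_bigr => j _.
by rewrite -big_split; apply: eq_bigr => k _; rewrite qfDr.
Qed.

Lemma bbil_ej N j l a b : bbil N (ej j a) (ej l b) = qf a (N j l) b.
Proof.
rewrite /bbil (sum_ej (F := fun j' x => \sum_k qf x (N j' k) (ej l b k))) => [|j'].
  by rewrite (sum_ej (F := fun k => qf a (N j k))) // => k; rewrite qf0r.
by rewrite big1 // => k _; rewrite qf0l.
Qed.

Lemma qf_bsym N j l a b :
  qf a (bsym N j l) b = bquad N (jadd (ej j a) (ej l b)) - bquad N (ej j a) - bquad N (ej l b).
Proof. by rewrite !bquadE bbilDl !bbilDr !bbil_ej qfDm qf_tr; ring. Qed.

Lemma bquad_bsym N v : bquad (bsym N) v = bquad N v *+ 2.
Proof.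
rewrite mulr2n !bquadE /bbil; under eq_bigr do under eq_bigr do rewrite qfDm qf_tr.
under eq_bigr do rewrite big_split.
by rewrite big_split /= [X in _ + X]exchange_big.
Qed.

Lemma bsym_tperm_invariant (S : pred 'I_n) N :
  (forall a b, a \in S -> b \in S -> forall y, bquad N (swapc a b y) = bquad N y) ->
  tperm_invariant S (bsym N).
Proof.
move=> N_inv a b aS bS j l; apply: qf_inj => x z; rewrite !qf_bsym.
rewrite -(N_inv a b aS bS (jadd (ej j x) (ej l z))) -(N_inv a b aS bS (ej j x)).
rewrite -(N_inv a b aS bS (ej l z)).
by congr (_ - _ - _); apply: eq_bquad => // k; rewrite /swapc /jadd !ej_tperm.
Qed.

Lemma bquad_stab_block i (α β β' γ δ : 'M[R]_d) y :
  bquad (stab_block i α β β' γ δ) y =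
  qf (y i) (α - β - β' - γ + δ + δ) (y i) + qf (y i) (β - δ + (β' - δ)^T) (\sum_j y j)
  + qf (\sum_j y j) δ (\sum_j y j) + \sum_j qf (y j) (γ - δ) (y j).
Proof.
set K := α - β - β' - γ + δ + δ.
have blockE j l : stab_block i α β β' γ δ j l =
    δ + (if l == j then γ - δ else 0) + (if j == i then β - δ else 0)
    + (if l == i then β' - δ else 0) + (if l == i then if j == i then K else 0 else 0).
  rewrite /stab_block; apply/matrixP => r s.
  have [ji | ji] := eqVneq j i; have [li | li] := eqVneq l i.
  - by rewrite ji li eqxx /K !mxE; ring.
  - by rewrite ji (negbTE li) !mxE; ring.
  - by rewrite li eq_sym (negbTE ji) !mxE; ring.
  - by rewrite (eq_sym l); case: eqP => _; rewrite !mxE; ring.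
have qf_if b a c (M : 'M[R]_d) : qf a (if b then M else 0) c = if b then qf a M c else 0.
  by case: b; rewrite ?qf0m.
have sum_if1 (F : 'I_n -> R) k : \sum_j (if j == k then F j else 0) = F k.
  by rewrite -big_mkcond big_pred1_eq.
rewrite bquadE /bbil.
under eq_bigr do under eq_bigr do rewrite blockE !qfDm !qf_if.
under eq_bigr do rewrite !big_split /= !sum_if1.
rewrite !big_split /= sum_if1 qfDm qf_tr qf_suml.
have sum_row : \sum_j \sum_l (if j == i then qf (y j) (β - δ) (y l) else 0) =
    qf (y i) (β - δ) (\sum_j y j).
  by rewrite exchange_big qf_sumr; apply: eq_bigr => l _; rewrite sum_if1.
have sum_all : \sum_j \sum_l qf (y j) δ (y l) = qf (\sum_j y j) δ (\sum_j y j).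
  by rewrite qf_suml; apply: eq_bigr => j _; rewrite qf_sumr.
by rewrite sum_row sum_all; ring.
Qed.

End Bquad.
End BlockForms.

Section MeanField.
Variables (n : nat) (n_gt1 : (1 < n)%N).

Let i0 : 'I_n := Ordinal (ltnW n_gt1).
Let i1 : 'I_n := Ordinal n_gt1.
Let i1_neq_i0 : i1 != i0. Proof. by []. Qed.
Let n_neq0 : n%:R != 0 :> R. Proof. by rewrite pnatr_eq0 -lt0n ltnW. Qed.

Lemma bapply_mean_field p q (M : bmx R n p q) :
  tperm_invariant predT M ->
  exists D O : 'M[R]_(p, q), forall x m, bapply M x m = D *m x m + O *m jmean x.
Proof.
move=> M_inv.
have ME m k : M m k = M i0 i1 + (if k == m then M i0 i0 - M i0 i1 else 0).
  have [-> | km] := eqVneq k m.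
    by rewrite (tperm_invariant_diag M_inv (j' := i0)) // addrC subrK.
  by rewrite addr0 (tperm_invariant_offdiag M_inv (j' := i0) (l' := i1)) 1?eq_sym.
exists (M i0 i0 - M i0 i1), (n%:R *: M i0 i1) => x m.
rewrite /bapply; under eq_bigr do rewrite ME mulmxDl (fun_if (mulmx^~ _)) mul0mx.
rewrite big_split /= -big_mkcond big_pred1_eq -mulmx_sumr /jmean.
by rewrite -scalemxAr -scalemxAl scalerA mulVf // scale1r addrC.
Qed.

Lemma bquad_mean_field d (M : 'I_n -> bmx R n d d) :
  (forall a b k y, bquad (M (tperm a b k)) y = bquad (M k) (swapc a b y)) ->
  exists Qt Sx Qbar G : 'M[R]_d, forall y i,
    bquad (M i) y = qf (y i) Qt (y i) + 2%:R * qf (y i) Sx (jmean y)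
      + qf (jmean y) Qbar (jmean y) + (n%:R)^-1 * \sum_j qf (y j) G (y j).
Proof.
move=> M_eqv; pose N := M i0.
have N_inv : tperm_invariant (predC1 i0) (bsym N).
  by apply: bsym_tperm_invariant => a b; rewrite !inE => ai0 bi0 y; rewrite -M_eqv tpermD.
have [α [β [β' [γ [δ NE]]]]] := tperm_invariant_stab_block i1_neq_i0 N_inv.
pose Qt := 2^-1 *: (α - β - β' - γ + δ + δ).
pose Sx := (4^-1 * n%:R) *: (β - δ + (β' - δ)^T).
pose Qbar := (2^-1 * n%:R ^+ 2) *: δ.
pose G := (2^-1 * n%:R) *: (γ - δ).
(* The factor 1/2 undoes [bquad_bsym]; the powers of n convert [\sum_j y j] into [jmean y]. *)
have N_meanE y : bquad N y = qf (y i0) Qt (y i0) + 2%:R * qf (y i0) Sx (jmean y)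
    + qf (jmean y) Qbar (jmean y) + (n%:R)^-1 * \sum_j qf (y j) G (y j).
  have := bquad_bsym N y; rewrite (eq_bquad (N' := stab_block i0 α β β' γ δ) (v' := y)) //.
  rewrite bquad_stab_block mulr2n => twice_NE.
  have -> : bquad N y = 2^-1 * (bquad N y + bquad N y) by field.
  rewrite -twice_NE /jmean /Qt /Sx /Qbar /G !qfZm !qfZl !qfZr.
  rewrite [X in _ = _ + _ * X](eq_bigr _ (fun j _ => qfZm _ _ _ _)) -mulr_sumr.
  by field.
exists Qt, Sx, Qbar, G => y i.
have -> : M i = M (tperm i0 i i0) by rewrite tpermL.
by rewrite M_eqv N_meanE jmean_swapc (sum_swapc (fun x => qf x G x)) /swapc tpermL.
Qed.

End MeanField.
End QuadraticForms.

Section Exchangeable.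
Variables (R : realFieldType) (n dx du : nat).
Variables (A : nat -> bmx R n dx dx) (B : nat -> bmx R n dx du).
Variables (Q : nat -> 'I_n -> bmx R n dx dx) (Rm : nat -> 'I_n -> bmx R n du du).
Hypothesis ex : exchangeable A B Q Rm.

Lemma exchangeable_dynamics_invariant t :
  tperm_invariant predT (A t) /\ tperm_invariant predT (B t).
Proof.
split; apply: bapply_tperm_invariant => a b _ _ v m.
- have := congr1 (fun f => f m) ((ex a b t).1 v _ (fun _ => 0) (fun _ => 0) erefl).
  by rewrite /swapc /jadd /= !bapply0 !addr0.
- have := congr1 (fun f => f m) ((ex a b t).1 (fun _ => 0) _ (fun _ => 0) v erefl).
  by rewrite /swapc /jadd /= !bapply0 !add0r !addr0.
Qed.

Lemma exchangeable_costs_equivariant t :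
  (forall a b k y, bquad (Q t (tperm a b k)) y = bquad (Q t k) (swapc a b y)) /\
  (forall a b k y, bquad (Rm t (tperm a b k)) y = bquad (Rm t k) (swapc a b y)).
Proof.
split=> a b k y.
- have := congr1 (fun f => f k) ((ex a b t).2 y (fun _ => 0)).
  by rewrite /swapc /costv /= !bquad0 !addr0.
- have := congr1 (fun f => f k) ((ex a b t).2 (fun _ => 0) y).
  by rewrite /swapc /costv /= !bquad0 !add0r.
Qed.

End Exchangeable.

Theorem proposition1 (R : realFieldType) (n dx du : nat) (hn : (2 <= n)%N)
  (A : nat -> bmx R n dx dx) (B : nat -> bmx R n dx du)
  (Q : nat -> 'I_n -> bmx R n dx dx) (Rm : nat -> 'I_n -> bmx R n du du) :
  exchangeable A B Q Rm ->
  forall t : nat,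
    (exists (At Abar : 'M[R]_dx) (Bt Bbar : 'M[R]_(dx, du)),
      forall (x w : jvec R n dx) (u : jvec R n du) (i : 'I_n),
        jadd (jadd (bapply (A t) x) (bapply (B t) u)) w i =
        At *m x i + Bt *m u i + Abar *m jmean x + Bbar *m jmean u + w i)
    /\
    (exists (Qt Sx Qbar Gx : 'M[R]_dx) (Rt Su Rbar Gu : 'M[R]_du),
      forall (x : jvec R n dx) (u : jvec R n du) (i : 'I_n),
        costv (Q t) (Rm t) x u i =
        qf (x i) Qt (x i) + 2%:R * qf (x i) Sx (jmean x) + qf (jmean x) Qbar (jmean x)
        + qf (u i) Rt (u i) + 2%:R * qf (u i) Su (jmean u) + qf (jmean u) Rbar (jmean u)
        + (n%:R)^-1 * \sum_(j < n) (qf (x j) Gx (x j) + qf (u j) Gu (u j))).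
Proof.
move=> ex t; split.
- have [A_inv B_inv] := exchangeable_dynamics_invariant ex t.
  have [At [Abar AE]] := bapply_mean_field hn A_inv.
  have [Bt [Bbar BE]] := bapply_mean_field hn B_inv.
  exists At, Abar, Bt, Bbar => x w u i.
  by rewrite /jadd AE BE addrACA !addrA.
- have [Q_eqv R_eqv] := exchangeable_costs_equivariant ex t.
  have [Qt [Sx [Qbar [Gx QE]]]] := bquad_mean_field hn Q_eqv.
  have [Rt [Su [Rbar [Gu RE]]]] := bquad_mean_field hn R_eqv.
  exists Qt, Sx, Qbar, Gx, Rt, Su, Rbar, Gu => x u i.
  by rewrite /costv QE RE big_split /= mulrDr; ring.
Qed.
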